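(* Let $P$ be a finite poset and $R$ a restriction function on $P$. If $f\in\mathrm{Inc}^R(P)$ has two distinct raisable elements, then $f$ is not meet-irreducible in $\mathrm{Inc}^R(P)$.
   Context: A restriction function assigns to each $p\in P$ a nonempty finite set $R(p)\subseteq\mathbb{Z}$. $\mathrm{Inc}^R(P)$ is the set of $f:P\to\mathbb{Z}$ with $f(p)\in R(p)$ and $p_1<p_2\Rightarrow f(p_1)<f(p_2)$, ordered pointwise, a lattice with pointwise min as meet. An element $p\in P$ is raisable in $f$ if there exists $g\in\mathrm{Inc}^R(P)$ with $f(p)<g(p)$ and $g(p')=f(p')$ for all $p'\ne p$. An element $x$ of a lattice is meet-irreducible if it is not the top element and $x=y\wedge z$ implies $x=y$ or $x=z$. *)

From HB Require Import structures.
From mathcomp Require Import all_boot all_order all_algebra.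
Set Implicit Arguments. Unset Strict Implicit. Unset Printing Implicit Defensive.
Import Order.TTheory GRing.Theory Num.Theory.

(* A finite poset P is a [finPOrderType d]; a restriction function assigns to
   each element a nonempty finite set of integers, represented as a nonempty
   sequence [R p : seq int] (membership [x \in R p]). *)

Definition restriction (d : Order.disp_t) (P : finPOrderType d)
  (R : P -> seq int) : Prop := forall p, R p != [::].

Definition inc (d : Order.disp_t) (P : finPOrderType d)
  (R : P -> seq int) (f : P -> int) : Prop :=
  (forall p, f p \in R p) /\ (forall p1 p2 : P, (p1 < p2)%O -> (f p1 < f p2)%R).

Definition raisable (d : Order.disp_t) (P : finPOrderType d)
  (R : P -> seq int) (f : P -> int) (p : P) : Prop :=
  exists g : P -> int, inc R g /\ (f p < g p)%R /\
    (forall p', p' != p -> g p' = f p').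

Definition is_top (d : Order.disp_t) (P : finPOrderType d)
  (R : P -> seq int) (f : P -> int) : Prop :=
  inc R f /\ forall g, inc R g -> forall p, (g p <= f p)%R.

Definition fmeet (d : Order.disp_t) (P : finPOrderType d)
  (g h : P -> int) : P -> int := fun p => Num.min (g p) (h p).

Definition meet_irreducible (d : Order.disp_t) (P : finPOrderType d)
  (R : P -> seq int) (f : P -> int) : Prop :=
  inc R f /\ ~ is_top R f /\
  forall g h, inc R g -> inc R h -> f =1 fmeet g h -> f =1 g \/ f =1 h.

From mathcomp Require Import all_boot all_order all_algebra.
Import Order.TTheory GRing.Theory Num.Theory.
Set Implicit Arguments. Unset Strict Implicit. Unset Printing Implicit Defensive.

(* Raising f at p1 and at p2 gives g1, g2 different from f, and f is their
   meet because at every point at least one of them still agrees with f. *)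

Lemma fmeet_raisings (d : Order.disp_t) (P : finPOrderType d)
    (f g1 g2 : P -> int) (p1 p2 : P) :
  p1 != p2 ->
  (f p1 <= g1 p1)%R -> (forall p, p != p1 -> g1 p = f p) ->
  (f p2 <= g2 p2)%R -> (forall p, p != p2 -> g2 p = f p) ->
  f =1 fmeet g1 g2.
Proof.
move=> p12 le1 eq1 le2 eq2 p; rewrite /fmeet.
have [->|pNp1] := eqVneq p p1; first by rewrite (eq2 p1 p12) (min_r le1).
rewrite (eq1 p pNp1); have [->|pNp2] := eqVneq p p2; first by rewrite (min_l le2).
by rewrite (eq2 p pNp2) minxx.
Qed.

Lemma ltr_not_eqfun (T : Type) (f g : T -> int) (p : T) :
  (f p < g p)%R -> ~ f =1 g.
Proof. by move=> lt_fg eq_fg; move: lt_fg; rewrite eq_fg ltxx. Qed.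

Theorem lemma2p5 (d : Order.disp_t) (P : finPOrderType d)
  (R : P -> seq int) (f : P -> int) :
  restriction R -> inc R f ->
  (exists p1 p2 : P, p1 != p2 /\ raisable R f p1 /\ raisable R f p2) ->
  ~ meet_irreducible R f.
Proof.
move=> _ _ [p1 [p2 [p12 [[g1 [inc1 [lt1 eq1]]] [g2 [inc2 [lt2 eq2]]]]]]].
move=> [_ [_ irreducible]].
have f_meet := fmeet_raisings p12 (ltW lt1) eq1 (ltW lt2) eq2.
case: (irreducible g1 g2 inc1 inc2 f_meet).
- exact: ltr_not_eqfun lt1.
- exact: ltr_not_eqfun lt2.
Qed.
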